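(* If there exist integer weights $w_1,\ldots,w_n$ such that $|w(2^{[n]})|=a$ and $\beta(w)=b$, then there exists a uniquely decodable code pair $(A,B)$ with $A,B\subseteq\{0,1\}^n$, $|A|=a$ and $|B|=b$.
   Context: For $X\subseteq[n]$, $w(X)=\sum_{i\in X}w_i$ and $w(2^{[n]})=\{w(X):X\subseteq[n]\}$; $\beta(w)=\max_{x\in\mathbb{Z}}|\{S\subseteq[n]:w(S)=x\}|$. A pair $(A,B)$ with $A,B\subseteq\{0,1\}^n$ is a uniquely decodable code pair if $|A+B|=|\{a+b:a\in A,b\in B\}|=|A|\cdot|B|$, where addition is over $\mathbb{Z}^n$ (not modulo 2). *)

From mathcomp Require Import all_boot all_order all_algebra.
Set Implicit Arguments. Unset Strict Implicit. Unset Printing Implicit Defensive.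
Import GRing.Theory Num.Theory.
Local Open Scope ring_scope.

Definition wsum (n : nat) (w : 'I_n -> int) (X : {set 'I_n}) : int :=
  \sum_(i in X) w i.

Definition num_subset_sums (n : nat) (w : 'I_n -> int) : nat :=
  size (undup [seq wsum w X | X <- enum {set 'I_n}]).

(* beta(w) = max_{x in Z} #{S : w(S) = x}; values x not attained contribute 0
   and some x is always attained, so the max ranges over attained sums. *)
Definition beta (n : nat) (w : 'I_n -> int) : nat :=
  \max_(S : {set 'I_n}) #|[set T : {set 'I_n} | wsum w T == wsum w S]|.

Definition bvec (n : nat) := {ffun 'I_n -> bool}.

(* coordinatewise sum over Z^n (not mod 2), as a list of n integers *)
Definition vadd (n : nat) (a b : bvec n) : seq int :=
  [seq (a i)%:Z + (b i)%:Z | i <- enum 'I_n].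

Definition sumset (n : nat) (A B : {set bvec n}) : seq (seq int) :=
  undup [seq vadd a b | a <- enum A, b <- enum B].

Definition UD_pair (n : nat) (A B : {set bvec n}) : Prop :=
  size (sumset A B) = (#|A| * #|B|)%N.

From mathcomp Require Import all_boot all_order all_algebra.
Set Implicit Arguments. Unset Strict Implicit. Unset Printing Implicit Defensive.
Import GRing.Theory Num.Theory.

(* Let c be a most frequent subset sum of w. Take A to be one subset for each
   subset sum and B all subsets of sum c, both as 0/1 vectors. Pairing an
   integer vector with w is additive, so a + b = a' + b' forces
   w(a) + c = w(a') + c; hence a and a' have the same sum, i.e. a = a', and
   then b = b'. Thus |A + B| = |A||B| with |A| = |w(2^[n])| and |B| = beta(w). *)

Lemma size_undup_map_eq (T U V : eqType) (f : T -> U) (g : T -> V) (s : seq T) :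
  (forall x y, (f x == f y) = (g x == g y)) ->
  size (undup (map f s)) = size (undup (map g s)).
Proof.
move=> fg; elim: s => [|x s IHs] //=.
have -> : (f x \in map f s) = (g x \in map g s).
  apply/mapP/mapP => -[y ys /eqP exy]; exists y => //; apply/eqP.
    by rewrite -fg.
  by rewrite fg.
by case: (g x \in map g s); rewrite /= IHs.
Qed.

Lemma card_imset_undup (T U : finType) (f : T -> U) (D : {pred T}) :
  #|[set f x | x in D]| = size (undup (map f (enum D))).
Proof.
rewrite -(card_uniqP (undup_uniq _)); apply: eq_card => y.
rewrite mem_undup; apply/imsetP/mapP => -[x xD ->]; exists x => //.
  by rewrite mem_enum.
by rewrite -mem_enum.
Qed.

Section IndicatorVectors.

Variable n : nat.

Definition indicator (X : {set 'I_n}) : bvec n := [ffun i => i \in X].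

Lemma indicator_inj : injective indicator.
Proof.
move=> X Y eXY; apply/setP => i.
by have := congr1 (fun v : bvec n => v i) eXY; rewrite !ffunE.
Qed.

Lemma wsum_indicator (w : 'I_n -> int) (X : {set 'I_n}) :
  wsum w X = (\sum_i w i * (indicator X i)%:Z)%R.
Proof.
rewrite /wsum big_mkcond /=; apply: eq_bigr => i _.
by rewrite ffunE; case: (i \in X); rewrite ?mulr1 ?mulr0.
Qed.

Lemma vaddP (a1 b1 a2 b2 : bvec n) :
  vadd a1 b1 = vadd a2 b2 -> forall i, ((a1 i)%:Z + (b1 i)%:Z = (a2 i)%:Z + (b2 i)%:Z)%R.
Proof. by move/eq_in_map => e i; apply: e; rewrite mem_enum. Qed.

Lemma vaddI (a b1 b2 : bvec n) : vadd a b1 = vadd a b2 -> b1 = b2.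
Proof.
move/vaddP => e; apply/ffunP => i.
by have /addrI := e i; case: (b1 i); case: (b2 i).
Qed.

Lemma wsum_vadd (w : 'I_n -> int) (X1 Y1 X2 Y2 : {set 'I_n}) :
  vadd (indicator X1) (indicator Y1) = vadd (indicator X2) (indicator Y2) ->
  (wsum w X1 + wsum w Y1 = wsum w X2 + wsum w Y2)%R.
Proof.
move/vaddP => e; rewrite !wsum_indicator -!big_split /=.
by apply: eq_bigr => i _; rewrite -!mulrDr e.
Qed.

Lemma UD_pair_inj (A B : {set bvec n}) :
  (forall a1 a2 b1 b2, a1 \in A -> a2 \in A -> b1 \in B -> b2 \in B ->
     vadd a1 b1 = vadd a2 b2 -> a1 = a2) ->
  UD_pair A B.
Proof.
move=> injA; rewrite /UD_pair /sumset undup_id ?size_allpairs -?cardE //.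
apply: allpairs_uniq; rewrite ?enum_uniq // => -[a1 b1] [a2 b2].
move=> /allpairsP[[a1' b1'] [/= a1A b1B [-> ->]]].
move=> /allpairsP[[a2' b2'] [/= a2A b2B [-> ->]]] /= e.
move: a1A b1B a2A b2B; rewrite !mem_enum => a1A b1B a2A b2B.
have ea := injA _ _ _ _ a1A a2A b1B b2B e.
by move: e; rewrite ea => /vaddI ->.
Qed.

End IndicatorVectors.

Section SubsetSums.

Variables (n : nat) (w : 'I_n -> int).

Definition sum_rep (X : {set 'I_n}) : {set 'I_n} :=
  odflt X [pick Y | wsum w Y == wsum w X].

Lemma wsum_sum_rep X : wsum w (sum_rep X) = wsum w X.
Proof. by rewrite /sum_rep; case: pickP => [Y /eqP|]. Qed.

Lemma eq_sum_rep X Y : (sum_rep X == sum_rep Y) = (wsum w X == wsum w Y).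
Proof.
apply/eqP/eqP => eXY.
  by rewrite -[LHS]wsum_sum_rep eXY wsum_sum_rep.
rewrite /sum_rep.
have -> : [pick Z | wsum w Z == wsum w X] = [pick Z | wsum w Z == wsum w Y].
  by rewrite eXY.
by case: pickP => // noY; have := noY Y; rewrite eqxx.
Qed.

Lemma num_subset_sums_rep :
  num_subset_sums w = #|[set sum_rep X | X : {set 'I_n}]|.
Proof.
rewrite card_imset_undup /num_subset_sums.
by apply: size_undup_map_eq => X Y; rewrite eq_sum_rep.
Qed.

Lemma beta_level : exists c, #|[set T | wsum w T == c]| = beta w.
Proof.
have nonempty : (0 < #|{: {set 'I_n}}|)%N by apply/card_gt0P; exists set0.
have [S0 maxS0] := eq_bigmax (fun S => #|[set T | wsum w T == wsum w S]|) nonempty.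
by exists (wsum w S0); rewrite /beta maxS0.
Qed.

Lemma UD_pair_rep_level c :
  UD_pair [set indicator (sum_rep X) | X : {set 'I_n}]
          [set indicator T | T in [set T | wsum w T == c]].
Proof.
apply: UD_pair_inj => a1 a2 b1 b2 /imsetP[X1 _ ->] /imsetP[X2 _ ->].
move=> /imsetP[T1 + ->] /imsetP[T2 + ->] /(wsum_vadd w).
rewrite !inE => /eqP -> /eqP -> /addIr.
by rewrite !wsum_sum_rep => /eqP; rewrite -eq_sum_rep => /eqP ->.
Qed.

End SubsetSums.

Theorem proposition4 (n a b : nat) :
  (exists w : 'I_n -> int, num_subset_sums w = a /\ beta w = b) ->
  exists A B : {set bvec n}, [/\ UD_pair A B, #|A| = a & #|B| = b].
Proof.
move=> [w [<- <-]]; have [c level_c] := beta_level w.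
exists [set indicator (sum_rep w X) | X : {set 'I_n}].
exists [set indicator T | T in [set T | wsum w T == c]].
split; first exact: UD_pair_rep_level.
- by rewrite num_subset_sums_rep imset_comp card_imset //; apply: indicator_inj.
- by rewrite card_imset //; apply: indicator_inj.
Qed.
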